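(* For any finite simple graphs $G$ and $H$ without isolated vertices, $$\gamma_{tR}(G\times H)\le 2\gamma_{t}(G)\gamma_{t}(H).$$
   Context: A set $D\subseteq V(G)$ is total dominating if every vertex of $G$ has a neighbor in $D$; $\gamma_t(G)$ is the minimum size of a total dominating set. A total Roman dominating function on $G$ is a map $f:V(G)\to\{0,1,2\}$ such that every vertex with label 0 has a neighbor with label 2 and the subgraph induced by vertices with positive labels has no isolated vertices; $\gamma_{tR}(G)$ is the minimum of $\sum_v f(v)$ over such $f$. The direct product $G\times H$ has vertex set $V(G)\times V(H)$, with $(g,h)(g',h')$ an edge iff $gg'\in E(G)$ and $hh'\in E(H)$. *)

From mathcomp Require Import all_boot.
Set Implicit Arguments. Unset Strict Implicit. Unset Printing Implicit Defensive.

Definition simple_graph (T : finType) (e : rel T) : Prop :=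
  symmetric e /\ irreflexive e.

Definition no_isolated (T : finType) (e : rel T) : Prop :=
  forall v : T, exists u : T, e v u.

Definition total_dominating (T : finType) (e : rel T) (D : {set T}) : bool :=
  [forall v : T, exists u in D, e v u].

(* total domination number (minimum size of a total dominating set);
   default #|T| is irrelevant when there are no isolated vertices *)
Definition gamma_t (T : finType) (e : rel T) : nat :=
  \big[minn/#|T|]_(D : {set T} | total_dominating e D) #|D|.

Definition total_roman (T : finType) (e : rel T) (f : {ffun T -> 'I_3}) : bool :=
  [forall v : T, (nat_of_ord (f v) == 0) ==> [exists u, e v u && (nat_of_ord (f u) == 2)]]
  && [forall v : T, (0 < f v) ==> [exists u, e v u && (0 < f u)]].

Definition weight (T : finType) (f : {ffun T -> 'I_3}) : nat :=
  \sum_(v : T) nat_of_ord (f v).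

Definition gamma_tR (T : finType) (e : rel T) : nat :=
  \big[minn/(2 * #|T|)]_(f : {ffun T -> 'I_3} | total_roman e f) weight f.

Definition direct_prod (T1 T2 : finType) (e1 : rel T1) (e2 : rel T2) : rel (T1 * T2) :=
  fun x y => e1 x.1 y.1 && e2 x.2 y.2.

(* If D1 and D2 totally dominate G and H, then D1 x D2 totally dominates
   G x H: a neighbour (a, b) of (g, h) is obtained coordinatewise.  Labelling
   D1 x D2 with 2 and every other vertex with 0 is then a total Roman
   dominating function of weight 2 |D1| |D2|: every vertex has a neighbour
   labelled 2, which serves both the vertices labelled 0 and the positive ones. *)

From mathcomp Require Import all_boot all_order.
Import Order.TTheory.

Set Implicit Arguments.
Unset Strict Implicit.
Unset Printing Implicit Defensive.

Lemma total_dominating_setT (T : finType) (e : rel T) :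
  no_isolated e -> total_dominating e [set: T].
Proof.
move=> noiso; apply/forallP => v; have [u evu] := noiso v.
by apply/existsP; exists u; rewrite in_setT.
Qed.

Lemma gamma_t_witness (T : finType) (e : rel T) :
  no_isolated e -> exists2 D, total_dominating e D & #|D| = gamma_t e.
Proof.
move=> /total_dominating_setT tdT; rewrite /gamma_t -minEnat.
have [D tdD ->] := eq_bigmin _ _ (fun D : {set T} => #|D|) tdT (fun D _ => max_card D).
by exists D.
Qed.

Lemma total_dominating_setX (T1 T2 : finType) (e1 : rel T1) (e2 : rel T2)
    (D1 : {set T1}) (D2 : {set T2}) :
  total_dominating e1 D1 -> total_dominating e2 D2 ->
  total_dominating (direct_prod e1 e2) (setX D1 D2).
Proof.
move=> /forallP td1 /forallP td2; apply/forallP => -[g h].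
have /existsP[a /andP[aD1 ega]] := td1 g.
have /existsP[b /andP[bD2 ehb]] := td2 h.
by apply/existsP; exists (a, b); rewrite in_setX aD1 bD2 /direct_prod /= ega ehb.
Qed.

Definition twice_indicator (T : finType) (D : {set T}) : {ffun T -> 'I_3} :=
  [ffun v => if v \in D then ord_max else ord0].

Lemma twice_indicatorE (T : finType) (D : {set T}) (v : T) :
  nat_of_ord (twice_indicator D v) = if v \in D then 2 else 0.
Proof. by rewrite ffunE; case: ifP. Qed.

Lemma total_roman_twice_indicator (T : finType) (e : rel T) (D : {set T}) :
  total_dominating e D -> total_roman e (twice_indicator D).
Proof.
move=> /forallP td.
have nbr2 v : [exists u, e v u && (nat_of_ord (twice_indicator D u) == 2)].
  have /existsP[u /andP[uD evu]] := td v.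
  by apply/existsP; exists u; rewrite evu twice_indicatorE uD.
apply/andP; split; apply/forallP => v; apply/implyP => _; first exact: nbr2.
have /existsP[u /andP[evu /eqP fu2]] := nbr2 v.
by apply/existsP; exists u; rewrite evu fu2.
Qed.

Lemma weight_twice_indicator (T : finType) (D : {set T}) :
  weight (twice_indicator D) = 2 * #|D|.
Proof.
rewrite /weight (eq_bigr _ (fun v _ => twice_indicatorE D v)) -big_mkcond /=.
by rewrite sum_nat_const mulnC.
Qed.

Lemma gamma_tR_le_twice_card (T : finType) (e : rel T) (D : {set T}) :
  total_dominating e D -> gamma_tR e <= 2 * #|D|.
Proof.
move=> tdD; rewrite -weight_twice_indicator /gamma_tR -minEnat.
exact: bigmin_le_cond _ (fun f => weight f) (total_roman_twice_indicator tdD).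
Qed.

Theorem corollary2p4 (T1 T2 : finType) (e1 : rel T1) (e2 : rel T2) :
  simple_graph e1 -> simple_graph e2 ->
  no_isolated e1 -> no_isolated e2 ->
  gamma_tR (direct_prod e1 e2) <= 2 * gamma_t e1 * gamma_t e2.
Proof.
move=> _ _ noiso1 noiso2.
have [D1 td1 <-] := gamma_t_witness noiso1.
have [D2 td2 <-] := gamma_t_witness noiso2.
rewrite -mulnA -cardsX.
exact: gamma_tR_le_twice_card (total_dominating_setX td1 td2).
Qed.
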